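(* Let $K \subsetneq L$ be an extension of fields such that $K$ is relatively algebraically closed in $L$ (every element of $L$ algebraic over $K$ lies in $K$). Let $W$ be the set of intermediate fields $F$ with $K \subset F \subset L$ such that $L$ has transcendence degree $1$ over $F$ and $F$ is relatively algebraically closed in $L$. Then $\bigcap_{F \in W} F = K$. *)

(* Fields are arbitrary (not necessarily finite-dimensional):
   we work inside the big field L : fieldType, and subfields of L are
   represented as Prop-valued subsets of L closed under the field operations. *)
From mathcomp Require Import all_boot all_algebra.
Set Implicit Arguments. Unset Strict Implicit. Unset Printing Implicit Defensive.
Import GRing.Theory.
Local Open Scope ring_scope.

Section FieldDefs.
Variable L : fieldType.

Definition is_subfield (S : L -> Prop) : Prop :=
  [/\ S 0, S 1,
      (forall x y, S x -> S y -> S (x - y)),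
      (forall x y, S x -> S y -> S (x * y)) &
      (forall x, S x -> x != 0 -> S x^-1)].

Definition algebraic_over (S : L -> Prop) (x : L) : Prop :=
  exists p : {poly L}, [/\ p != 0, (forall i, S p`_i) & root p x].

Definition rel_alg_closed (S : L -> Prop) : Prop :=
  forall x, algebraic_over S x -> S x.

Definition adjoin (S : L -> Prop) (t : L) : L -> Prop :=
  fun x => forall E : L -> Prop, is_subfield E -> (forall y, S y -> E y) ->
             E t -> E x.

(* L has transcendence degree 1 over F: {t} is a transcendence basis,
   i.e. t is transcendental (= algebraically independent) over F and
   L is algebraic over F(t). *)
Definition trdeg1_over (F : L -> Prop) : Prop :=
  exists t : L, ~ algebraic_over F t /\ (forall x, algebraic_over (adjoin F t) x).

End FieldDefs.

(** The nontrivial inclusion: given x outside K, Zorn's lemma yields a subfield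
    E containing K, maximal among the relatively algebraically closed subfields
    over which x is transcendental.  If some z were transcendental over E(x),
    the exchange lemma would make x transcendental over the algebraic closure
    of E(z) in L, contradicting maximality.  So L is algebraic over E(x), E lies
    in W, and x is not in E. *)

From HB Require Import structures.
From mathcomp Require Import all_boot all_algebra.
From mathcomp Require Import ring.
From mathcomp Require Import boolp classical_sets.
Set Implicit Arguments. Unset Strict Implicit. Unset Printing Implicit Defensive.
Import GRing.Theory.
Local Open Scope ring_scope.

(* Bundling a subfield with its axioms gives it a fieldType of elements,
   [subfield_type], so that mathcomp's [algebraicOver] theory applies. *)
Record subfield_of (L : fieldType) :=
  SubfieldOf { subfield_pred :> L -> Prop; subfieldP : is_subfield subfield_pred }.

Section SubfieldType.
Variables (L : fieldType) (S : subfield_of L).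

Definition subfield_mem : {pred L} := fun x => `[< S x >].

Lemma subfield_memP x : reflect (S x) (x \in subfield_mem).
Proof. exact: asboolP. Qed.

Lemma subfield_mem_divring_closed : divring_closed subfield_mem.
Proof.
have [S0 S1 SB SM SV] := subfieldP S.
split=> [|x y /subfield_memP Sx /subfield_memP Sy|
          x y /subfield_memP Sx /subfield_memP Sy]; apply/subfield_memP => //.
- exact: SB.
- have [->|y0] := eqVneq y 0; first by rewrite invr0 mulr0.
  exact/SM/SV.
Qed.

HB.instance Definition _ :=
  GRing.isDivringClosed.Build L subfield_mem subfield_mem_divring_closed.

Record subfield_type :=
  SubfieldElem { subfield_val : L; _ : subfield_val \in subfield_mem }.
HB.instance Definition _ := [isSub for subfield_val].
HB.instance Definition _ := [Choice of subfield_type by <:].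
HB.instance Definition _ := [SubChoice_isSubIntegralDomain of subfield_type by <:].
HB.instance Definition _ := [SubIntegralDomain_isSubField of subfield_type by <:].

Lemma subfield_valP (a : subfield_type) : S (val a).
Proof. exact/subfield_memP/valP. Qed.

Lemma polyOver_subfield (p : {poly L}) :
  (forall i, S p`_i) -> exists q : {poly subfield_type}, p = map_poly val q.
Proof.
move=> Sp; exists (\poly_(i < size p) insubd 0 p`_i).
apply/polyP => i; rewrite coef_map coef_poly; case: ltnP => [_|/(nth_default 0)->//].
by rewrite /= insubdK //; apply/subfield_memP.
Qed.

Lemma algebraic_overE x :
  algebraic_over S x <-> algebraicOver (val : subfield_type -> L) x.
Proof.
split=> [[p [p0 /polyOver_subfield[q pq] px]]|[q q0 qx]].
  by exists q; rewrite -?pq // -(map_poly_eq0 val) -pq.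
exists (map_poly val q); split=> [||//]; first by rewrite map_poly_eq0.
by move=> i; rewrite coef_map; apply: subfield_valP.
Qed.

Lemma subfield_horner (p : {poly L}) t : (forall i, S p`_i) -> S t -> S p.[t].
Proof.
move=> Sp St; apply/subfield_memP/rpred_horner; last exact/subfield_memP.
by apply/polyOverP => i; apply/subfield_memP.
Qed.

Definition horner_val (t : L) : {rmorphism {poly subfield_type} -> L} :=
  horner_eval t \o map_poly val.

Lemma horner_valE t p : horner_val t p = (map_poly val p).[t].
Proof. by []. Qed.

Lemma horner_valC t c : horner_val t c%:P = val c.
Proof. by rewrite horner_valE map_polyC hornerC. Qed.

Lemma horner_valX t : horner_val t 'X = t.
Proof. by rewrite horner_valE map_polyX hornerX. Qed.

Lemma horner_val_eq0 x r :
  ~ algebraic_over S x -> horner_val x r = 0 -> r = 0.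
Proof.
move=> x_tr rx0; apply/eqP/negPn/negP => r0.
by apply/x_tr/algebraic_overE; exists r; last exact/rootP.
Qed.

End SubfieldType.

Arguments horner_val {L} S t.

Section AlgebraicClosure.
Variable L : fieldType.

Lemma algebraic_over_mem (S : subfield_of L) y : S y -> algebraic_over S y.
Proof.
move=> Sy; apply/algebraic_overE.
rewrite -[y]/(val (SubfieldElem (introT (subfield_memP S y) Sy))).
exact: algebraic_id.
Qed.

Lemma alg_closure_subfield (S : subfield_of L) : is_subfield (algebraic_over S).
Proof.
split.
- exact/algebraic_overE/algebraic0.
- exact/algebraic_overE/algebraic1.
- by move=> x y /algebraic_overE x_alg /algebraic_overE y_alg;
    apply/algebraic_overE/algebraic_sub.
- by move=> x y /algebraic_overE x_alg /algebraic_overE y_alg;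
    apply/algebraic_overE/algebraic_mul.
- by move=> x /algebraic_overE x_alg _; apply/algebraic_overE/algebraic_inv.
Qed.

Lemma alg_closure_rel_alg_closed (S : subfield_of L) :
  rel_alg_closed (algebraic_over S).
Proof.
move=> y [p [p0 Sp py]]; apply/algebraic_overE/integral_algebraic.
apply: (integral_root p0 py) => _ /(nthP 0)[i _ <-].
exact/integral_algebraic/algebraic_overE/Sp.
Qed.

End AlgebraicClosure.

Section Adjoin.
Variable L : fieldType.

Lemma adjoin_subfield (S : L -> Prop) t : is_subfield (adjoin S t).
Proof.
split=> [E [] //|E [] //|x y Sx Sy E|x y Sx Sy E|x Sx x0 E] E_sub SE Et;
  have [_ _ EB EM EV] := E_sub.
- exact: EB (Sx _ E_sub SE Et) (Sy _ E_sub SE Et).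
- exact: EM (Sx _ E_sub SE Et) (Sy _ E_sub SE Et).
- exact: EV (Sx _ E_sub SE Et) x0.
Qed.

Lemma sub_adjoin (S : L -> Prop) t y : S y -> adjoin S t y.
Proof. by move=> Sy E _ SE _; apply: SE. Qed.

Lemma mem_adjoin (S : L -> Prop) t : adjoin S t t.
Proof. by move=> E. Qed.

Definition adjoin_subfield_of (S : L -> Prop) t := SubfieldOf (adjoin_subfield S t).

Variables (S : subfield_of L) (t : L).
Local Notation ev := (horner_val S t).

Lemma adjoin_horner_val a : adjoin S t (ev a).
Proof.
rewrite horner_valE.
apply: (subfield_horner (S := adjoin_subfield_of S t) _ (@mem_adjoin S t)) => i.
by rewrite coef_map; apply: sub_adjoin; apply: subfield_valP.
Qed.

Definition rational_in : L -> Prop :=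
  fun y => exists a b, ev b != 0 /\ y = ev a / ev b.

Lemma rational_in_subfield : is_subfield rational_in.
Proof.
split.
- by exists 0, 1; rewrite rmorph0 rmorph1 mul0r oner_neq0.
- by exists 1, 1; rewrite rmorph1 divr1 oner_neq0.
- move=> _ _ [a1 [b1 [b10 ->]]] [a2 [b2 [b20 ->]]].
  exists (a1 * b2 - a2 * b1), (b1 * b2); rewrite rmorphB !rmorphM mulf_neq0 //.
  by split=> //; field; rewrite b10 b20.
- move=> _ _ [a1 [b1 [b10 ->]]] [a2 [b2 [b20 ->]]].
  exists (a1 * a2), (b1 * b2); rewrite !rmorphM mulf_neq0 //.
  by split=> //; field; rewrite b10 b20.
- move=> _ [a [b [b0 ->]]] ab0; exists b, a.
  have a0 : ev a != 0 by apply: contraNneq ab0 => ->; rewrite mul0r.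
  by split=> //; field; rewrite a0 b0.
Qed.

Lemma adjoin_rational y : adjoin S t y -> rational_in y.
Proof.
apply; first exact: rational_in_subfield.
  move=> a Sa; exists (SubfieldElem (introT (subfield_memP S a) Sa))%:P, 1.
  by rewrite rmorph1 horner_valC divr1 oner_neq0; split.
by exists 'X, 1; rewrite horner_valX rmorph1 divr1 oner_neq0.
Qed.

Lemma adjoin_common_denominator (p : {poly L}) : (forall i, adjoin S t p`_i) ->
  exists (d : {poly subfield_type S}) (P : {poly {poly subfield_type S}}),
    ev d != 0 /\ forall i, ev d * p`_i = ev P`_i.
Proof.
elim/poly_ind: p => [|q c IHq] adj_p.
  exists 1, 0; rewrite rmorph1 oner_neq0.
  by split=> // i; rewrite !coef0 mulr0 rmorph0.
have adj_q i : adjoin S t q`_i.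
  by move: (adj_p i.+1); rewrite coefD coefMX coefC addr0.
have adj_c : adjoin S t c by move: (adj_p 0%N); rewrite coefD coefMX coefC add0r.
have [d [P [d0 dP]]] := IHq adj_q.
have [a [b [b0 ->]]] := adjoin_rational adj_c.
exists (d * b), (P * b%:P * 'X + (d * a)%:P); rewrite rmorphM mulf_neq0 //.
split=> // -[|i]; rewrite !coefD !coefMX !coefC.
  by rewrite eqxx !add0r !rmorphM; field.
by rewrite !addr0 coefMC !rmorphM -dP; ring.
Qed.

End Adjoin.

Lemma algebraic_exchange (L : fieldType) (S : subfield_of L) x z :
  ~ algebraic_over S x -> algebraic_over (adjoin S z) x ->
  algebraic_over (adjoin S x) z.
Proof.
(* Clearing denominators, d(z) p(X) = P(z, X) with P over S.  Read as a
   polynomial in z, P(_, x) has coefficients in S(x); it vanishes at z, and is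
   nonzero because x is transcendental over S. *)
move=> x_tr [p [p0 adj_p px]].
have [d [P [d0 dP]]] := adjoin_common_denominator adj_p.
pose U := map_poly (map_poly val) P.
have UE : U.[x%:P] = map_poly (horner_val S x) (swapXY P).
  by rewrite horner_polyC /U swapXY_map -map_poly_comp.
have UzE : map_poly (horner_eval z) U = horner_val S z d *: p.
  by apply/polyP => i; rewrite -map_poly_comp coef_map coefZ dP.
exists (map_poly (horner_val S x) (swapXY P)); split.
- apply: contraNneq p0 => Q0.
  have P0 : P = 0.
    apply/eqP; rewrite -swapXY_eq0; apply/eqP/polyP => j; rewrite coef0.
    by apply: (horner_val_eq0 x_tr); rewrite -coef_map Q0 coef0.
  apply/eqP/polyP => i; apply: (mulfI d0).
  by rewrite dP P0 !coef0 rmorph0 mulr0.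
- by move=> j; rewrite coef_map; apply: adjoin_horner_val.
- have xz : (horner_eval z : {rmorphism _ -> _}) x%:P = x := hornerC x z.
  apply/rootP; rewrite -horner_evalE -UE -horner_map xz UzE.
  by rewrite hornerZ (rootP px) mulr0.
Qed.

Local Open Scope classical_set_scope.

(* The empty chain has union set0, so Zorn's lemma is applied to P plus set0. *)
Lemma Zorn_bigcup_nonempty (T : Type) (P : set (set T)) (A0 : set T) : P A0 ->
  (forall F, F `<=` P -> F !=set0 -> total_on F subset -> P (\bigcup_(X in F) X)) ->
  exists A, P A /\ forall B, P B -> A `<=` B -> B `<=` A.
Proof.
move=> PA0 P_chain.
have [|A [PA' Amax]] := Zorn_bigcup (P := [set X | X = set0 \/ P X]).
  move=> F FP F_total.
  have [[X [FX PX]]|noP] := pselect (exists X, F X /\ P X); [right|left].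
  - have -> : \bigcup_(Y in F) Y = \bigcup_(Y in [set Y | F Y /\ P Y]) Y.
      apply/seteqP; split=> y [Y FY Yy]; last by exists Y => //; case: FY.
      by case: (FP Y FY) => [Y0|PY]; [rewrite Y0 in Yy | exists Y].
    apply: P_chain => [Y [] //| |Y Z [FY _] [FZ _]]; first by exists X.
    exact: F_total.
  - apply/seteqP; split=> // y [Y FY Yy].
    by case: (FP Y FY) => [Y0|PY]; [rewrite Y0 in Yy | apply: noP; exists Y].
have maxA B : P B -> A `<=` B -> B `<=` A.
  by move=> PB AB; apply: contrapT => BA; apply: (Amax B (conj AB BA)); right.
exists A; split=> //; case: PA' => [A0'|//].
by move: (maxA A0 PA0); rewrite A0' subset0 => /(_ (sub0set _)) <-.
Qed.

Lemma chain_bigcup_seq (T : eqType) (F : set (set T)) (s : seq T) :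
  F !=set0 -> total_on F subset -> {in s, forall y, (\bigcup_(X in F) X) y} ->
  exists2 X, F X & {in s, forall y, X y}.
Proof.
move=> [X0 FX0] F_total; elim: s => [|y s IHs] s_sub; first by exists X0.
have [X FX Xs] : exists2 X, F X & {in s, forall u, X u}.
  by apply: IHs => u us; apply: s_sub; rewrite in_cons us orbT.
have [Y FY Yy] := s_sub y (mem_head y s).
have [XY|YX] := F_total X Y FX FY.
- by exists Y => // u; rewrite in_cons => /predU1P[-> //|/Xs/XY].
- by exists X => // u; rewrite in_cons => /predU1P[->|/Xs//]; apply: YX.
Qed.

Section SubfieldChains.
Variables (L : fieldType) (F : set (set L)).
Hypotheses (F_nonempty : F !=set0) (F_total : total_on F subset).
Local Notation U := (\bigcup_(E in F) E).

Lemma bigcup_chain_subfield :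
  (forall E, F E -> is_subfield E) -> is_subfield U.
Proof.
move=> F_sub; have [E0 FE0] := F_nonempty.
have [E0_0 E0_1 _ _ _] := F_sub E0 FE0.
have common x y : U x -> U y -> exists2 E, F E & E x /\ E y.
  move=> Ux Uy.
  have [|E FE Exy] := chain_bigcup_seq (s := [:: x; y]) F_nonempty F_total.
    by move=> u; rewrite !inE => /orP[]/eqP->.
  by exists E => //; split; apply: Exy; rewrite !inE eqxx ?orbT.
split; [by exists E0 | by exists E0 | | | ].
- move=> x y Ux Uy; have [E FE [Ex Ey]] := common x y Ux Uy.
  by have [_ _ EB _ _] := F_sub E FE; exists E => //; apply: EB.
- move=> x y Ux Uy; have [E FE [Ex Ey]] := common x y Ux Uy.
  by have [_ _ _ EM _] := F_sub E FE; exists E => //; apply: EM.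
- move=> x [E FE Ex] x0.
  by have [_ _ _ _ EV] := F_sub E FE; exists E => //; apply: EV.
Qed.

Lemma algebraic_over_bigcup_chain y : (forall E, F E -> E 0) ->
  algebraic_over U y -> exists2 E, F E & algebraic_over E y.
Proof.
move=> F0 [p [p0 Up py]].
have [|E FE Ep] := chain_bigcup_seq (s := p) F_nonempty F_total.
  by move=> _ /(nthP 0)[i _ <-]; apply: Up.
exists E => //; exists p; split=> // i.
by have [/(mem_nth 0)/Ep|/(nth_default 0)->] := ltnP i (size p); last exact: F0.
Qed.

End SubfieldChains.

Section MaximalTranscendence.
Variables (L : fieldType) (K : set L) (x : L).

Definition rac_avoiding : set (set L) :=
  [set E | [/\ is_subfield E, K `<=` E, rel_alg_closed E & ~ algebraic_over E x]].

Lemma rac_avoiding_bigcup F : F `<=` rac_avoiding -> F !=set0 ->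
  total_on F subset -> rac_avoiding (\bigcup_(E in F) E).
Proof.
move=> F_rac F_nonempty F_total.
have F0 E : F E -> E 0 by move=> /F_rac[[]].
have alg_U y := @algebraic_over_bigcup_chain _ _ F_nonempty F_total y F0.
split.
- by apply: bigcup_chain_subfield => // E /F_rac[].
- by have [E FE] := F_nonempty; have [_ KE _ _] := F_rac E FE => y /KE; exists E.
- move=> y /alg_U[E FE yE].
  by have [_ _ E_rac _] := F_rac E FE; exists E => //; apply: E_rac.
- by move=> /alg_U[E FE xE]; have [_ _ _ x_tr] := F_rac E FE; apply: x_tr.
Qed.

Lemma rac_avoiding_maximal_trdeg1 E : rac_avoiding E ->
  (forall B, rac_avoiding B -> E `<=` B -> B `<=` E) -> trdeg1_over E.
Proof.
move=> [E_sub KE _ x_tr] E_max; exists x; split=> // z.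
apply: contrapT => z_tr.
pose Ez := adjoin_subfield_of E z.
have E_Ez : E `<=` algebraic_over Ez.
  by move=> y Ey; apply: algebraic_over_mem; apply: sub_adjoin.
have Ez_avoiding : rac_avoiding (algebraic_over Ez).
  split.
  - exact: alg_closure_subfield.
  - by move=> y /KE/E_Ez.
  - exact: alg_closure_rel_alg_closed.
  - move=> /alg_closure_rel_alg_closed x_alg; apply: z_tr.
    exact: (algebraic_exchange (S := SubfieldOf E_sub)).
have Ez_z : E z.
  exact: E_max _ Ez_avoiding E_Ez z (algebraic_over_mem (S := Ez) (@mem_adjoin _ E z)).
apply: z_tr; apply: (algebraic_over_mem (S := adjoin_subfield_of E x)).
exact: sub_adjoin.
Qed.

End MaximalTranscendence.

Unset Implicit Arguments. Set Strict Implicit.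

Theorem lemma3p8 (L : fieldType) (K : L -> Prop) :
  is_subfield K ->
  (exists x : L, ~ K x) ->
  rel_alg_closed K ->
  forall x : L,
    (forall F : L -> Prop,
        is_subfield F -> (forall y, K y -> F y) ->
        trdeg1_over F -> rel_alg_closed F -> F x)
    <-> K x.
Proof.
move=> K_sub _ K_rac x; split=> [in_W|Kx F _ KF _ _]; last exact: KF.
apply: contrapT => Kx'.
have K_avoiding : rac_avoiding K x K by split=> //; move/K_rac.
have [E [E_avoiding E_max]] :=
  Zorn_bigcup_nonempty K_avoiding (@rac_avoiding_bigcup L K x).
have [E_sub KE E_rac x_tr] := E_avoiding.
apply/x_tr/(algebraic_over_mem (S := SubfieldOf E_sub)).
apply: (in_W E E_sub KE _ E_rac).
exact: (rac_avoiding_maximal_trdeg1 E_avoiding E_max).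
Qed.
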